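(* $s_{\mathbf A_R}=s_\Gamma$.
   Context: Let $\mathbf A_R=\{A_1,A_2,A_3\}$ with $A_1=\begin{pmatrix}1&1&1\\0&1&0\\0&0&1\end{pmatrix}$, $A_2=\begin{pmatrix}1&0&0\\1&1&1\\0&0&1\end{pmatrix}$, $A_3=\begin{pmatrix}1&0&0\\0&1&0\\1&1&1\end{pmatrix}$, and $\Gamma=\{A_i^nA_j: i\ne j\in\{1,2,3\},\ n\ge1\}$. For singular values $\alpha_1\ge\alpha_2\ge\alpha_3$ and $s\ge0$: $\phi^s(A)=(\alpha_2/\alpha_1)^s$ for $0\le s\le1$; $\frac{\alpha_2}{\alpha_1}(\frac{\alpha_3}{\alpha_1})^{s-1}$ for $1\le s\le2$; $(\frac{\alpha_2\alpha_3}{\alpha_1^2})^s$ for $s\ge2$. For a finite or countable set $\mathbf A$ of matrices, $\zeta_{\mathbf A}(s)=\sum_{n\ge1}\sum\phi^s(B_1\cdots B_n)$ over all words $(B_1,\dots,B_n)\in\mathbf A^n$, and $s_{\mathbf A}=\inf\{s\ge0:\zeta_{\mathbf A}(s)<\infty\}$. *)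

From HB Require Import structures.
From mathcomp Require Import all_boot all_order all_algebra.
From mathcomp Require Import all_classical all_reals all_analysis.
Set Implicit Arguments. Unset Strict Implicit. Unset Printing Implicit Defensive.
Import Order.TTheory GRing.Theory Num.Theory.
Local Open Scope classical_set_scope.
Local Open Scope ring_scope.

Section Defs.
Variable R : realType.

(* A_R = {A_1, A_2, A_3}; indices 0,1,2 stand for 1,2,3.
   A_k has ones on the diagonal and in the whole row k, zeros elsewhere:
   A_1 = [1 1 1; 0 1 0; 0 0 1], A_2 = [1 0 0; 1 1 1; 0 0 1],
   A_3 = [1 0 0; 0 1 0; 1 1 1]. *)
Definition Amat (k : 'I_3) : 'M[R]_3 :=
  \matrix_(i < 3, j < 3) ((i == j) || (i == k))%:R.

Definition A_R : set 'M[R]_3 := [set B | exists k : 'I_3, B = Amat k].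

Definition Gamma : set 'M[R]_3 :=
  [set B | exists (i j : 'I_3) (n : nat),
     i != j /\ (1 <= n)%N /\ B = Amat i ^+ n *m Amat j].

(* (a1, a2, a3) are the singular values of A, in decreasing order:
   a1 >= a2 >= a3 >= 0 and a1^2, a2^2, a3^2 are the eigenvalues (with
   multiplicity) of A^T A, i.e. the roots of its characteristic polynomial. *)
Definition is_svals (A : 'M[R]_3) (a : R * R * R) : Prop :=
  let: (a1, a2, a3) := a in
  [/\ 0 <= a3, a3 <= a2, a2 <= a1 &
   char_poly (A^T *m A) =
     ('X - (a1 ^+ 2)%:P) * ('X - (a2 ^+ 2)%:P) * ('X - (a3 ^+ 2)%:P)].

Definition svals (A : 'M[R]_3) : R * R * R := xget (0, 0, 0) (is_svals A).

Definition phi (s : R) (A : 'M[R]_3) : R :=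
  let: (a1, a2, a3) := svals A in
  if s <= 1 then (a2 / a1) `^ s
  else if s <= 2 then (a2 / a1) * (a3 / a1) `^ (s - 1)
  else (a2 * a3 / a1 ^+ 2) `^ s.

Definition words (S : set 'M[R]_3) : set (seq 'M[R]_3) :=
  [set w | w != [::] /\ forall B, B \in w -> S B].

Definition zeta (S : set 'M[R]_3) (s : R) : \bar R :=
  (\esum_(w in words S) (phi s (\prod_(B <- w) B))%:E)%E.

Definition crit_exp (S : set 'M[R]_3) : \bar R :=
  ereal_inf [set s%:E | s in [set s : R | 0 <= s /\ (zeta S s < +oo)%E]].

End Defs.

From HB Require Import structures.
From mathcomp Require Import all_boot all_order all_algebra.
From mathcomp Require Import all_classical all_reals all_analysis.
From mathcomp Require Import ring lra zify.
From mathcomp Require complex.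
Set Implicit Arguments. Unset Strict Implicit. Unset Printing Implicit Defensive.
Import Order.TTheory GRing.Theory Num.Theory.
Local Open Scope classical_set_scope.
Local Open Scope ring_scope.

(* Spelling A_i^n A_j (i <> j, n >= 1) as its letters A_i ... A_i A_j embeds the Gamma-words
   into the A_R-words and preserves products, because A_i^n A_j determines (i, j, n); hence
   zeta_Gamma <= zeta_A_R.  An A_R-word that is not such a spelling ends with an unfinished
   block, and becomes one once a letter different from its last letter is appended.  For a
   product X of letters det X = 1, so phi^s(X) is a monotone expression in sigma_1 and
   sigma_1 sigma_2, which are comparable to the Frobenius norms of X and of adj X = X^-1;
   multiplying X on the right by A_k changes both norms by a bounded factor.  Appending a
   letter thus lowers phi^s by at most a factor K_s, so zeta_A_R <= (1 + K_s) zeta_Gamma and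
   both series converge for the same s. *)

Section Frobenius.
Variable R : comNzRingType.

Definition frob2 m n (X : 'M[R]_(m, n)) := \sum_i \sum_j X i j ^+ 2.

Lemma mxtrace_mulmx_trmx m n (X : 'M[R]_(m, n)) : \tr (X^T *m X) = frob2 X.
Proof.
rewrite /frob2 exchange_big; apply: eq_bigr => j _; rewrite !mxE.
by apply: eq_bigr => i _; rewrite mxE expr2.
Qed.

End Frobenius.

Lemma frob2_ge0 (F : realDomainType) m n (X : 'M[F]_(m, n)) : 0 <= frob2 X.
Proof. by apply: sumr_ge0 => i _; apply: sumr_ge0 => j _; apply: sqr_ge0. Qed.

Lemma sum_mul_sqr_le (F : realDomainType) (I : finType) (a b : I -> F) :
  (\sum_i a i * b i) ^+ 2 <= (\sum_i a i ^+ 2) * (\sum_i b i ^+ 2).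
Proof.
set S := \sum_i _; set A := \sum_i _; set B := \sum_i _.
have A_ge0 : 0 <= A by apply: sumr_ge0 => i _; apply: sqr_ge0.
have B_ge0 : 0 <= B by apply: sumr_ge0 => i _; apply: sqr_ge0.
have sq_expand i : (B * a i - S * b i) ^+ 2 =
    B ^+ 2 * a i ^+ 2 - B * S *+ 2 * (a i * b i) + S ^+ 2 * b i ^+ 2 by ring.
have key : \sum_i (B * a i - S * b i) ^+ 2 = B * (A * B - S ^+ 2).
  rewrite (eq_bigr _ (fun i _ => sq_expand i)) !big_split sumrN -!mulr_sumr /=.
  by rewrite -/A -/B -/S; ring.
have : 0 <= B * (A * B - S ^+ 2) by rewrite -key sumr_ge0 // => i _; apply: sqr_ge0.
have := B_ge0; rewrite le_eqVlt => /orP[/eqP B0 _|B_gt0].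
  2: by rewrite pmulr_rge0 // subr_ge0.
have b0 i : b i = 0.
  apply/eqP; rewrite -sqrf_eq0; apply/eqP.
  by apply: (psumr_eq0P _ (esym B0)) => // j _; apply: sqr_ge0.
rewrite /S (eq_bigr _ (fun i _ => congr1 _ (b0 i))) big1 => [|i _]; last exact: mulr0.
by rewrite expr0n mulr_ge0.
Qed.

Lemma frob2_mulmx (F : realDomainType) m n p (X : 'M[F]_(m, n)) (Y : 'M[F]_(n, p)) :
  frob2 (X *m Y) <= frob2 X * frob2 Y.
Proof.
apply: (@le_trans _ _ (\sum_i \sum_k (\sum_j X i j ^+ 2) * (\sum_j Y j k ^+ 2))).
  by apply: ler_sum => i _; apply: ler_sum => k _; rewrite mxE sum_mul_sqr_le.
rewrite /frob2 big_distrl /=; apply: ler_sum => i _.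
by rewrite -mulr_sumr [X in _ <= _ * X]exchange_big.
Qed.

(* [ring] identifies entries syntactically, so indices such as [lift 0 (lift 0 0)]
   are first normalised to [inord 2]. *)
Ltac ring_mx33 M :=
  let m := fresh "m" in
  pose m i j := M (inord i) (inord j);
  (have : forall i j, M i j = m i j by move=> i j; rewrite /m !inord_val);
  let mE := fresh "mE" in move=> mE;
  rewrite !mE /= /bump /=; ring.

Lemma det_mx33 (R : comNzRingType) (M : 'M[R]_3) :
  \det M = M 0 0 * M 1 1 * M 2 2 - M 0 0 * M 1 2 * M 2 1
         - M 0 1 * M 1 0 * M 2 2 + M 0 1 * M 1 2 * M 2 0
         + M 0 2 * M 1 0 * M 2 1 - M 0 2 * M 1 1 * M 2 0.
Proof.
rewrite (expand_det_row _ 0) !big_ord_recl big_ord0 /cofactor.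
rewrite !(expand_det_row _ 0) !big_ord_recl !big_ord0 /cofactor !det_mx11 !mxE.
ring_mx33 M.
Qed.

Section ThreeByThree.
Variable R : comNzRingType.
Implicit Types M X : 'M[R]_3.

Definition minor2_sum M := M 0 0 * M 1 1 - M 0 1 * M 1 0 + M 0 0 * M 2 2
  - M 0 2 * M 2 0 + M 1 1 * M 2 2 - M 1 2 * M 2 1.

Lemma horner_char_poly3 M x :
  (char_poly M).[x] = x ^+ 3 - \tr M * x ^+ 2 + minor2_sum M * x - \det M.
Proof.
rewrite /char_poly (det_mx33 (char_poly_mx M)) det_mx33 /mxtrace.
rewrite !big_ord_recl big_ord0 !mxE !hornerE /minor2_sum; ring_mx33 M.
Qed.

Lemma minor2_sum_mulmx_trmx X : minor2_sum (X^T *m X) = frob2 (\adj X).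
Proof.
rewrite /frob2 /minor2_sum !mxE !big_ord_recl !big_ord0 !mxE /cofactor.
rewrite !(expand_det_row _ 0) !big_ord_recl !big_ord0 /cofactor !det_mx11 !mxE.
ring_mx33 X.
Qed.

End ThreeByThree.

Lemma vieta_char_poly3 (F : realFieldType) (M : 'M[F]_3) p q r :
  char_poly M = ('X - p%:P) * ('X - q%:P) * ('X - r%:P) ->
  [/\ p + q + r = \tr M, p * q + p * r + q * r = minor2_sum M
    & p * q * r = \det M].
Proof.
move=> cpM.
have cpE x : (x - p) * (x - q) * (x - r) =
    x ^+ 3 - \tr M * x ^+ 2 + minor2_sum M * x - \det M.
  by rewrite -horner_char_poly3 cpM !hornerE.
have := cpE 0; have := cpE 1; have := cpE (-1).
rewrite !expr0n !expr1n /= !exprS !expr0; split; lra.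
Qed.

Lemma invmx_mulmx1 (F : comUnitRingType) n (X Y : 'M[F]_n) :
  X *m Y = 1%:M -> invmx X = Y.
Proof.
by move=> XY; have [uX _] := mulmx1_unit XY; rewrite -[RHS](mulKmx uX) XY mulmx1.
Qed.

Lemma invmxM (F : comUnitRingType) n (X Y : 'M[F]_n) :
  X \in unitmx -> Y \in unitmx -> invmx (X *m Y) = invmx Y *m invmx X.
Proof.
move=> uX uY; apply: invmx_mulmx1.
by rewrite mulmxA -(mulmxA X) mulmxV // mulmx1 mulmxV.
Qed.

Lemma adj_det1 (F : comUnitRingType) n (X : 'M[F]_n) : \det X = 1 -> \adj X = invmx X.
Proof. by move=> dX; rewrite /invmx unitmxE dX unitr1 invr1 scale1r. Qed.

Lemma char_poly_conjmx (F : fieldType) n (P M : 'M[F]_n) : P \in unitmx ->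
  char_poly (invmx P *m M *m P) = char_poly M.
Proof.
move=> Pu; rewrite /char_poly /char_poly_mx.
pose Q := map_mx polyC P; pose Qi := map_mx polyC (invmx P).
have QiQ : Qi *m Q = 1%:M by rewrite -map_mxM mulVmx // map_mx1.
have QQi : Q *m Qi = 1%:M by rewrite -map_mxM mulmxV // map_mx1.
have -> : 'X%:M - map_mx polyC (invmx P *m M *m P) =
    Qi *m ('X%:M - map_mx polyC M) *m Q.
  by rewrite !map_mxM mulmxBr mulmxBl mul_mx_scalar -scalemxAl QiQ scalemx1.
by rewrite !det_mulmx mulrC mulrA -det_mulmx QQi det1 mul1r.
Qed.

Section RealSymmetric.
Import complex.

Lemma char_poly_sym_split (F : rcfType) n (M : 'M[F]_n) : M^T = M ->
  exists d : 'I_n -> F, char_poly M = \prod_i ('X - (d i)%:P).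
Proof.
move=> MT; pose f := @real_complex F; pose Mc := map_mx f M.
have Mherm : Mc \is hermsymmx.
  apply: realsym_hermsym.
    apply/is_hermitianmxP; rewrite expr0 scale1r.
    by apply/matrixP => i j; rewrite !mxE -[in LHS]MT mxE.
  by apply/mxOverP => i j; rewrite mxE; apply/complex_realP; exists (M i j).
have /orthomx_spectralP Mc_diag := hermitian_normalmx Mherm.
have /mxOverP d_real := hermitian_spectral_diag_real Mherm.
set P := spectralmx Mc in Mc_diag; set dc := spectral_diag Mc in Mc_diag d_real.
have cpMc : char_poly Mc = \prod_i ('X - (dc 0 i)%:P).
  rewrite Mc_diag char_poly_conjmx ?spectral_unit // char_poly_trig ?diag_mx_is_trig //.
  by apply: eq_bigr => i _; rewrite mxE eqxx.
have /all_sig [d dE] i : {x : F | dc 0 i = f x}.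
  by apply: sig_eqW; apply/complex_realP; exact: d_real.
exists d; apply: (@map_poly_inj _ _ f).
rewrite map_char_poly cpMc rmorph_prod; apply: eq_bigr => i _.
by rewrite rmorphB /= map_polyX map_polyC dE.
Qed.

End RealSymmetric.

Lemma cubic_root_ge0 (F : realDomainType) (a b c x : F) :
  0 <= a -> 0 <= b -> 0 <= c -> x ^+ 3 - a * x ^+ 2 + b * x - c = 0 -> 0 <= x.
Proof.
move=> a0 b0 c0; rewrite !exprS expr0 !mulr1; case: (leP 0 x) => // x0.
have : 0 <= a * (x * x) by rewrite mulr_ge0 // -expr2 sqr_ge0.
have : b * x <= 0 by rewrite mulr_ge0_le0 // ltW.
have : x * (x * x) < 0 by rewrite nmulr_rlt0 // nmulr_rgt0.
lra.
Qed.

Lemma sort_factors3 (F : realDomainType) (p q r : F) :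
  0 <= p -> 0 <= q -> 0 <= r -> exists a1 a2 a3 : F,
  [/\ 0 <= a3, a3 <= a2, a2 <= a1 &
   ('X - p%:P) * ('X - q%:P) * ('X - r%:P) =
   ('X - a1%:P) * ('X - a2%:P) * ('X - a3%:P)].
Proof.
move=> p0 q0 r0.
have [pq|qp] := leP p q; have [qr|rq] := leP q r; have [pr|rp] := leP p r.
- by exists r, q, p; split; [lra|lra|lra|ring].
- by exists r, q, p; split; [lra|lra|lra|ring].
- by exists q, r, p; split; [lra|lra|lra|ring].
- by exists q, p, r; split; [lra|lra|lra|ring].
- by exists r, p, q; split; [lra|lra|lra|ring].
- by exists p, r, q; split; [lra|lra|lra|ring].
- by exists p, q, r; split; [lra|lra|lra|ring].
- by exists p, q, r; split; [lra|lra|lra|ring].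
Qed.

Lemma elem_sym3_bounds (F : realDomainType) (p q r : F) : 0 <= r -> r <= q -> q <= p ->
  (p <= p + q + r <= 3 * p) /\ (p * q <= p * q + p * r + q * r <= 3 * (p * q)).
Proof. by move=> *; split; apply/andP; split; nra. Qed.

Lemma ler_mul_of_sqr (F : realFieldType) (k x y : F) : 1 <= k -> 0 <= x -> 0 <= y ->
  x ^+ 2 <= k * y ^+ 2 -> x <= k * y.
Proof.
move=> k1 x0 y0 xy; have k0 : 0 <= k := le_trans ler01 k1.
rewrite -(@ler_pXn2r _ 2) ?nnegrE ?mulr_ge0 //.
by apply: le_trans xy _; rewrite exprMn ler_wpM2r ?sqr_ge0 // expr2 ler_peMl.
Qed.

Section SingularValues.
Variable R : realType.
Implicit Types X : 'M[R]_3.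

Lemma svals_exists X : exists a, is_svals X a.
Proof.
set M := X^T *m X.
have [d] : exists d : 'I_3 -> R, char_poly M = \prod_i ('X - (d i)%:P).
  by apply: char_poly_sym_split; rewrite trmx_mul trmxK.
rewrite !big_ord_recl big_ord0 mulr1 mulrA; set p := d _; set q := d _; set r := d _.
move=> cpM; have root_ge0 x : (char_poly M).[x] = 0 -> 0 <= x.
  rewrite horner_char_poly3; apply: cubic_root_ge0.
  - by rewrite mxtrace_mulmx_trmx frob2_ge0.
  - by rewrite minor2_sum_mulmx_trmx frob2_ge0.
  - by rewrite det_mulmx det_tr -expr2 sqr_ge0.
have [p0 q0 r0] : [/\ 0 <= p, 0 <= q & 0 <= r].
  by split; apply: root_ge0; rewrite cpM !hornerE subrr ?(mul0r, mulr0).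
have [a1 [a2 [a3 [a30 a32 a21 cpE]]]] := sort_factors3 p0 q0 r0.
have a20 := le_trans a30 a32; have a10 := le_trans a20 a21.
exists (Num.sqrt a1, Num.sqrt a2, Num.sqrt a3); split.
- exact: sqrtr_ge0.
- by rewrite ler_sqrt.
- by rewrite ler_sqrt.
- by rewrite !sqr_sqrtr // -/M cpM cpE.
Qed.

Lemma svalsP X : is_svals X (svals X).
Proof. exact: xgetPex (svals_exists X). Qed.

Lemma svals_det1 X : \det X = 1 ->
  let: (a1, a2, a3) := svals X in
  [/\ 0 < a3, a3 <= a2 <= a1, a1 * a2 * a3 = 1,
      a1 ^+ 2 + a2 ^+ 2 + a3 ^+ 2 = frob2 X &
      a1 ^+ 2 * a2 ^+ 2 + a1 ^+ 2 * a3 ^+ 2 + a2 ^+ 2 * a3 ^+ 2 = frob2 (\adj X)].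
Proof.
move=> dX; have := svalsP X; case: (svals X) => [[a1 a2] a3] [a30 a32 a21 cpE].
have [sum2 prod2 prod3] := vieta_char_poly3 cpE.
rewrite mxtrace_mulmx_trmx in sum2; rewrite minor2_sum_mulmx_trmx in prod2.
rewrite det_mulmx det_tr dX mulr1 -!exprMn in prod3.
have a_ge0 : 0 <= a1 * a2 * a3 by rewrite !mulr_ge0 // (le_trans a30) // (le_trans a32).
have a_prod : a1 * a2 * a3 = 1.
  by apply/eqP; rewrite -(@eqrXn2 _ 2) // ?expr1n ?prod3.
have a3_gt0 : 0 < a3.
  rewrite lt_neqAle a30 andbT; apply/eqP => a3_0.
  by move: a_prod; rewrite -a3_0 mulr0 => /esym/eqP; rewrite oner_eq0.
by split; rewrite ?a32 ?a21.
Qed.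

End SingularValues.

Section PhiRatios.
Variable R : realType.
Implicit Types s k u v w : R.

Definition phi_ratios s u v w : R :=
  if s <= 1 then u `^ s else if s <= 2 then u * v `^ (s - 1) else w `^ s.

Lemma phiE s (X : 'M[R]_3) : phi s X =
  let: (a1, a2, a3) := svals X in phi_ratios s (a2 / a1) (a3 / a1) (a2 * a3 / a1 ^+ 2).
Proof. by rewrite /phi; case: (svals X) => [[]]. Qed.

Lemma phi_ratios_ge0 s u v w : 0 <= u -> 0 <= phi_ratios s u v w.
Proof.
by move=> u0; rewrite /phi_ratios; case: ifP => _; [|case: ifP => _];
  rewrite ?mulr_ge0 ?powR_ge0.
Qed.

Lemma phi_ge0 s (X : 'M[R]_3) : 0 <= phi s X.
Proof.
have := svalsP X; rewrite phiE; case: (svals X) => [[a1 a2] a3] [a30 a32 a21 _].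
have a20 := le_trans a30 a32; have a10 := le_trans a20 a21.
by apply: phi_ratios_ge0; rewrite divr_ge0.
Qed.

Lemma phi_ratios_le s k u v w u' v' w' : 0 <= s -> 1 <= k ->
  0 <= u <= k * u' -> 0 <= v <= k * v' -> 0 <= w <= k * w' ->
  0 <= u' -> 0 <= v' -> 0 <= w' ->
  phi_ratios s u v w <= k * k `^ s * phi_ratios s u' v' w'.
Proof.
move=> s0 k1 /andP[u0 uk] /andP[v0 vk] /andP[w0 wk] u'0 v'0 w'0.
have k0 : 0 <= k := le_trans ler01 k1.
have pow_le r x y : 0 <= r -> 0 <= x -> x <= k * y -> 0 <= y -> x `^ r <= k `^ r * y `^ r.
  by move=> r0 x0 xy y0; rewrite -powRM // ge0_ler_powR // ?nnegrE ?mulr_ge0.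
have kk_s : k `^ s <= k * k `^ s by rewrite ler_peMl // powR_ge0.
rewrite /phi_ratios; case: ifP => s1.
  by apply: le_trans (pow_le _ _ _ s0 u0 uk u'0) _; rewrite ler_wpM2r ?powR_ge0.
case: ifP => s2; last first.
  by apply: le_trans (pow_le _ _ _ s0 w0 wk w'0) _; rewrite ler_wpM2r ?powR_ge0.
have s1_ge0 : 0 <= s - 1 by rewrite subr_ge0 ltW // ltNge s1.
have kk_s1 : k `^ (s - 1) <= k `^ s by rewrite ler_powR // lerBlDr lerDl.
apply: le_trans (ler_pM u0 (powR_ge0 _ _) uk (pow_le _ _ _ s1_ge0 v0 vk v'0)) _.
by rewrite mulrACA ler_wpM2r ?mulr_ge0 ?powR_ge0 // ler_wpM2l.
Qed.

End PhiRatios.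

(* When a1 a2 a3 = 1 the three ratios are a1 a2 / a1^2, 1 / (a1 (a1 a2)) and 1 / a1^3. *)
Lemma sv_ratios_le (F : realFieldType) (c a1 a2 a3 b1 b2 b3 : F) : 1 <= c ->
  0 < a3 -> a3 <= a2 -> a2 <= a1 -> 0 < b3 -> b3 <= b2 -> b2 <= b1 ->
  a1 * a2 * a3 = 1 -> b1 * b2 * b3 = 1 ->
  b1 <= c * a1 -> a1 * a2 <= c * (b1 * b2) -> b1 * b2 <= c * (a1 * a2) ->
  [/\ a2 / a1 <= c ^+ 3 * (b2 / b1), a3 / a1 <= c ^+ 3 * (b3 / b1)
    & a2 * a3 / a1 ^+ 2 <= c ^+ 3 * (b2 * b3 / b1 ^+ 2)].
Proof.
move=> c1 a30 a32 a21 b30 b32 b21 a_prod b_prod b1a1 ya yb.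
have c0 : 0 < c := lt_le_trans ltr01 c1.
have a1_gt0 : 0 < a1 by rewrite (lt_le_trans a30) // (le_trans a32).
have b1_gt0 : 0 < b1 by rewrite (lt_le_trans b30) // (le_trans b32).
have ya_gt0 : 0 < a1 * a2 by rewrite mulr_gt0 // (lt_le_trans a30).
have yb_gt0 : 0 < b1 * b2 by rewrite mulr_gt0 // (lt_le_trans b30).
have inv_le x y : 0 < x -> 0 < y -> y <= c * x -> x^-1 <= c * y^-1.
  move=> x0 y0 yx; rewrite -[c]invrK -invfM lef_pV2 ?posrE ?mulr_gt0 ?invr_gt0 //.
  by rewrite ler_pdivrMl.
have ia := inv_le _ _ a1_gt0 b1_gt0 b1a1.
have a3E : a3 = (a1 * a2)^-1.
  by apply: (mulfI (lt0r_neq0 ya_gt0)); rewrite /= a_prod mulfV ?gt_eqF.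
have b3E : b3 = (b1 * b2)^-1.
  by apply: (mulfI (lt0r_neq0 yb_gt0)); rewrite /= b_prod mulfV ?gt_eqF.
have a3_le : a3 <= c * b3 by rewrite a3E b3E inv_le.
have a1_neq0 := lt0r_neq0 a1_gt0; have b1_neq0 := lt0r_neq0 b1_gt0.
have a23E : a2 * a3 = a1^-1.
  by rewrite a3E invfM mulrCA mulfV ?mulr1 // lt0r_neq0 // (lt_le_trans a30).
have b23E : b2 * b3 = b1^-1.
  by rewrite b3E invfM mulrCA mulfV ?mulr1 // lt0r_neq0 // (lt_le_trans b30).
have le_mul3 (x1 x2 x3 y1 y2 y3 : F) : 0 <= x1 -> 0 <= x2 -> 0 <= x3 ->
    x1 <= y1 -> x2 <= y2 -> x3 <= y3 -> x1 * x2 * x3 <= y1 * y2 * y3.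
  by move=> *; rewrite !ler_pM ?mulr_ge0.
have ia0 : 0 <= a1^-1 by rewrite invr_ge0 ltW.
split.
- have -> : a2 / a1 = a1 * a2 * a1^-1 * a1^-1 by field.
  have -> : c ^+ 3 * (b2 / b1) = c * (b1 * b2) * (c / b1) * (c / b1) by field.
  by rewrite le_mul3 // ltW.
- have -> : a3 / a1 = a3 * a1^-1 * 1 by rewrite mulr1.
  have -> : c ^+ 3 * (b3 / b1) = c * b3 * (c / b1) * c by field.
  by rewrite le_mul3 // ltW.
- have -> : a2 * a3 / a1 ^+ 2 = a1^-1 * a1^-1 * a1^-1 by rewrite a23E; field.
  have -> : c ^+ 3 * (b2 * b3 / b1 ^+ 2) = c / b1 * (c / b1) * (c / b1).
    by rewrite b23E; field.
  by rewrite le_mul3.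
Qed.

Lemma phi_le_of_frob2 (R : realType) (c s : R) (X Y : 'M[R]_3) :
  1 <= c -> 0 <= s -> \det X = 1 -> \det Y = 1 ->
  frob2 Y <= c * frob2 X -> frob2 (\adj X) <= c * frob2 (\adj Y) ->
  frob2 (\adj Y) <= c * frob2 (\adj X) ->
  phi s X <= (3 * c) ^+ 3 * ((3 * c) ^+ 3) `^ s * phi s Y.
Proof.
move=> c1 s0 dX dY FYX GXY GYX; rewrite !phiE.
move: (svals_det1 dX) (svals_det1 dY).
case: (svals X) => [[a1 a2] a3]; case: (svals Y) => [[b1 b2] b3].
move=> [a30 /andP[a32 a21] a_prod FX GX] [b30 /andP[b32 b21] b_prod FY GY].
have sqr_le (x y : R) : 0 <= x -> x <= y -> x ^+ 2 <= y ^+ 2.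
  by move=> x0 xy; rewrite ler_pXn2r ?nnegrE // (le_trans x0).
have [/andP[FXl FXu] /andP[GXl GXu]] := elem_sym3_bounds (sqr_ge0 a3)
  (sqr_le _ _ (ltW a30) a32) (sqr_le _ _ (le_trans (ltW a30) a32) a21).
have [/andP[FYl FYu] /andP[GYl GYu]] := elem_sym3_bounds (sqr_ge0 b3)
  (sqr_le _ _ (ltW b30) b32) (sqr_le _ _ (le_trans (ltW b30) b32) b21).
rewrite FX in FXl FXu; rewrite GX in GXl GXu; rewrite FY in FYl FYu; rewrite GY in GYl GYu.
have c0 : 0 <= c := le_trans ler01 c1.
have c3 : 1 <= 3 * c by lra.
have [a20 b20] := (lt_le_trans a30 a32, lt_le_trans b30 b32).
have [a10 b10] := (lt_le_trans a20 a21, lt_le_trans b20 b21).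
have [ya0 yb0] := (mulr_gt0 a10 a20, mulr_gt0 b10 b20).
have b1a1 : b1 <= 3 * c * a1.
  apply: ler_mul_of_sqr c3 (ltW b10) (ltW a10) _.
  by have := ler_wpM2l c0 FXu; lra.
have ya : a1 * a2 <= 3 * c * (b1 * b2).
  apply: ler_mul_of_sqr c3 (ltW ya0) (ltW yb0) _; rewrite !exprMn.
  by have := ler_wpM2l c0 GYu; lra.
have yb : b1 * b2 <= 3 * c * (a1 * a2).
  apply: ler_mul_of_sqr c3 (ltW yb0) (ltW ya0) _; rewrite !exprMn.
  by have := ler_wpM2l c0 GXu; lra.
have [r1 r2 r3] := sv_ratios_le c3 a30 a32 a21 b30 b32 b21 a_prod b_prod b1a1 ya yb.
move: a10 a20 a30 b10 b20 b30 => /ltW ? /ltW ? /ltW ? /ltW ? /ltW ? /ltW ?.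
by apply: phi_ratios_le; rewrite ?r1 ?r2 ?r3 ?exprn_ege1 ?divr_ge0 ?mulr_ge0.
Qed.

Ltac case_I3 i := case: i => [[|[|[|//]]] ?].

Section Letters.
Variable R : realType.
Local Notation A := (@Amat R).
Implicit Types (X : 'M[R]_3) (k : 'I_3).

Lemma det_Amat k : \det (A k) = 1.
Proof. by rewrite det_mx33 !mxE; case_I3 k; rewrite /=; lra. Qed.

Lemma invmx_Amat k : invmx (A k) = 2%:M - A k.
Proof.
apply: invmx_mulmx1; apply/matrixP => i j.
rewrite !mxE !big_ord_recl big_ord0 !mxE.
by case_I3 k; case_I3 i; case_I3 j; rewrite /=; lra.
Qed.

Lemma frob2_Amat k : frob2 (A k) = 5.
Proof.
rewrite /frob2 !big_ord_recl !big_ord0 !mxE.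
by case_I3 k; rewrite /=; lra.
Qed.

Lemma frob2_invmx_Amat k : frob2 (invmx (A k)) = 5.
Proof.
rewrite invmx_Amat /frob2 !big_ord_recl !big_ord0 !mxE.
by case_I3 k; rewrite /=; lra.
Qed.

Lemma phi_mulmx_Amat_le s : 0 <= s ->
  exists K : R, forall X k, \det X = 1 -> phi s X <= K * phi s (X *m A k).
Proof.
move=> s0; eexists => X k dX.
have uX : X \in unitmx by rewrite unitmxE dX unitr1.
have uA : A k \in unitmx by rewrite unitmxE det_Amat unitr1.
have dY : \det (X *m A k) = 1 by rewrite det_mulmx dX det_Amat mulr1.
have adjY : \adj (X *m A k) = invmx (A k) *m \adj X by rewrite !adj_det1 // invmxM.
have adjX : \adj X = A k *m \adj (X *m A k) by rewrite adjY mulKVmx.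
apply: (@phi_le_of_frob2 _ 5) => //; first by rewrite ler1n.
- by rewrite -(frob2_Amat k) mulrC frob2_mulmx.
- by rewrite adjX -(frob2_Amat k) frob2_mulmx.
- by rewrite adjY -(frob2_invmx_Amat k) frob2_mulmx.
Qed.

End Letters.

Section GammaFree.
Variable R : realType.
Local Notation A := (@Amat R).
Implicit Types (i j k l : 'I_3) (n m : nat).

Lemma Amat_inj : injective A.
Proof.
move=> i k /matrixP/(_ i k); rewrite !mxE eqxx orbT orbb.
by case: eqP => // _ /eqP; rewrite oner_eq0.
Qed.

(* The column A_i^n A_j (1, 1, 1)^T: its entry 1 + 4n sits at i and its entry 3 at j. *)
Definition gamma_col i j n : 'cV[R]_3 :=
  \col_a (1 + 2 * (a == j) + 4 * n * (a == i))%N%:R.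

Lemma Amat_gamma_col i j n : i != j -> A i *m gamma_col i j n = gamma_col i j n.+1.
Proof.
move=> ij; apply/matrixP => a b; rewrite !mxE !big_ord_recl big_ord0 !mxE.
move: ij; case_I3 i; case_I3 j => //; case_I3 a => _ /=;
  rewrite ?mul1r ?mul0r ?add0r ?addr0 -?natrD; congr (_%:R); lia.
Qed.

Lemma Amat_const1 i j : i != j -> A j *m const_mx 1 = gamma_col i j 0.
Proof.
move=> ij; apply/matrixP => a b; rewrite !mxE !big_ord_recl big_ord0 !mxE.
move: ij; case_I3 i; case_I3 j => //; case_I3 a => _ /=;
  rewrite ?natrD ?natrM ?mulr0n ?mulr1n; lra.
Qed.

Lemma Gamma_mx_const1 i j n : i != j ->
  A i ^+ n *m A j *m const_mx 1 = gamma_col i j n.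
Proof.
move=> ij; rewrite -mulmxA (Amat_const1 ij).
elim: n => [|n IHn]; first by rewrite expr0 mul1mx.
by rewrite exprS -mulmxE -mulmxA IHn Amat_gamma_col.
Qed.

Lemma gamma_col_inj i j k l n m : i != j -> k != l -> (0 < n)%N ->
  gamma_col i j n = gamma_col k l m -> [/\ i = k, j = l & n = m].
Proof.
move=> ij kl n_gt0 /matrixP E.
have {}E a : (1 + 2 * (a == j) + 4 * n * (a == i) =
              1 + 2 * (a == l) + 4 * m * (a == k))%N.
  by apply/eqP; rewrite -(eqr_nat R); apply/eqP; have := E a 0; rewrite !mxE.
have Ei := E i; rewrite eqxx (negbTE ij) in Ei.
have ik : i = k by apply/eqP; move: Ei; case: (i == k) => //; case: (i == l) => /=; lia.
subst k; have Ej := E j; rewrite eqxx eq_sym (negbTE ij) in Ej.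
rewrite (negbTE kl) in Ei.
have jl : j = l by apply/eqP; move: Ej; case: (j == l) => //=; lia.
by split => //; lia.
Qed.

Lemma Gamma_mx_inj i j k l n m : i != j -> k != l -> (0 < n)%N ->
  A i ^+ n *m A j = A k ^+ m *m A l -> [/\ i = k, j = l & n = m].
Proof.
move=> ij kl n_gt0 E; apply: gamma_col_inj => //.
by rewrite -(Gamma_mx_const1 _ ij) -(Gamma_mx_const1 _ kl) E.
Qed.

End GammaFree.

Lemma nseq_cat_inj (T : eqType) (a b c : T) n m s t : b != a -> c != a ->
  nseq n a ++ b :: s = nseq m a ++ c :: t -> [/\ n = m, b = c & s = t].
Proof.
move=> ba ca; elim: n m => [|n IHn] [|m] /=.
- by case=> -> ->.
- by case=> ab; rewrite ab eqxx in ba.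
- by case=> ac; rewrite ac eqxx in ca.
- by case=> /IHn [-> -> ->].
Qed.

Section Spelling.
Variable R : realType.
Local Notation A := (@Amat R).
Local Notation M3 := 'M[R]_3.
Local Notation Gamma := (@Gamma R).
Local Notation A_R := (@A_R R).
Implicit Types (i j k l : 'I_3) (n m : nat) (B C : M3) (u v w : seq M3).

Definition seq_in (S : set M3) w := forall B, B \in w -> S B.

Lemma seq_in_cons S B w : seq_in S (B :: w) <-> S B /\ seq_in S w.
Proof.
split=> [Sw|[SB Sw] C]; last by rewrite in_cons => /orP[/eqP ->|/Sw].
by split=> [|C Cw]; apply: Sw; rewrite in_cons ?eqxx ?Cw ?orbT.
Qed.

Lemma seq_in_rcons S w B : seq_in S (rcons w B) <-> seq_in S w /\ S B.
Proof.
split=> [Sw|[Sw SB] C]; last by rewrite mem_rcons in_cons => /orP[/eqP ->|/Sw].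
by split=> [C Cw|]; apply: Sw; rewrite mem_rcons in_cons ?eqxx ?Cw ?orbT.
Qed.

Definition block i j n : seq M3 := nseq n (A i) ++ [:: A j].

Definition is_block w := exists i j n, [/\ i != j, (0 < n)%N & w = block i j n].

Lemma prod_block i j n : \prod_(C <- block i j n) C = A i ^+ n *m A j.
Proof.
rewrite big_cat big_seq1 /= mulmxE; congr (_ * _).
by elim: n => [|n IHn]; rewrite ?big_nil ?expr0 // big_cons IHn exprS.
Qed.

Lemma GammaE B : Gamma B <-> exists2 w, is_block w & \prod_(C <- w) C = B.
Proof.
split=> [[i [j [n [ij [n_gt0 ->]]]]]|[_ [i [j [n [ij n_gt0 ->]]]] <-]].
  by exists (block i j n); [exists i, j, n | rewrite prod_block].
by exists i, j, n; rewrite prod_block.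
Qed.

Lemma block_prod_inj w w' : is_block w -> is_block w' ->
  \prod_(C <- w) C = \prod_(C <- w') C -> w = w'.
Proof.
move=> [i [j [n [ij n_gt0 ->]]]] [k [l [m [kl _ ->]]]]; rewrite !prod_block.
by move=> /(Gamma_mx_inj ij kl n_gt0) [<- <- <-].
Qed.

Lemma block_cat_inj w w' s t : is_block w -> is_block w' ->
  w ++ s = w' ++ t -> w = w' /\ s = t.
Proof.
move=> [i [j [n [ij n_gt0 ->]]]] [k [l [m [kl m_gt0 ->]]]].
case: n m n_gt0 m_gt0 => [|n] [|m] // _ _ [/Amat_inj ik]; subst k.
have ji : A j != A i by apply: contraNneq ij => /Amat_inj ->.
have li : A l != A i by apply: contraNneq kl => /Amat_inj ->.
by rewrite /block -!catA => /(nseq_cat_inj ji li) [-> -> ->].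
Qed.

Definition spells B w := is_block w /\ \prod_(C <- w) C = B.

Definition spell B : seq M3 := xget [::] (spells B).

Lemma spellP B : Gamma B -> spells B (spell B).
Proof. by move=> /GammaE [w wb wB]; apply: xgetPex; exists w. Qed.

Lemma spell_prod w : is_block w -> spell (\prod_(C <- w) C) = w.
Proof.
move=> wb; have Gw : Gamma (\prod_(C <- w) C) by apply/GammaE; exists w.
by have [sb sw] := spellP Gw; apply: block_prod_inj.
Qed.

Lemma spell_neq_nil B : Gamma B -> spell B != [::].
Proof. by move=> /spellP[[i [j [n [_ _ ->]]]] _]; rewrite /block; case: n. Qed.

Lemma spell_in_A B : Gamma B -> seq_in A_R (spell B).
Proof.
move=> /spellP[[i [j [n [_ _ ->]]]] _] C; rewrite mem_cat mem_nseq mem_seq1.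
by case/orP=> [/andP[_ /eqP ->]|/eqP ->]; [exists i | exists j].
Qed.

Definition spell_word u : seq M3 := flatten (map spell u).

Lemma spell_word_rcons u B : spell_word (rcons u B) = spell_word u ++ spell B.
Proof. by rewrite /spell_word map_rcons flatten_rcons. Qed.

Lemma prod_spell_word u : seq_in Gamma u ->
  \prod_(C <- spell_word u) C = \prod_(B <- u) B.
Proof.
move=> uG; rewrite /spell_word big_flatten big_map; apply: eq_big_seq => B Bu.
by case: (spellP (uG B Bu)).
Qed.

Lemma spell_word_eq_nil u : seq_in Gamma u -> (spell_word u == [::]) = (u == [::]).
Proof.
case: u => // B u /seq_in_cons[GB _].
rewrite /spell_word /= -size_eq0 size_cat addn_eq0 size_eq0.
by rewrite (negbTE (spell_neq_nil GB)).
Qed.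

Lemma spell_word_in_A u : seq_in Gamma u -> seq_in A_R (spell_word u).
Proof. by move=> uG C /flattenP[_ /mapP[B Bu ->]]; apply: spell_in_A (uG B Bu) C. Qed.

Lemma spell_word_inj u v : seq_in Gamma u -> seq_in Gamma v ->
  spell_word u = spell_word v -> u = v.
Proof.
elim: u v => [|B u IHu] [|C v] //.
- by move=> _ /spell_word_eq_nil vG /esym/eqP; rewrite vG.
- by move=> /spell_word_eq_nil uG _ /eqP; rewrite uG.
move=> /seq_in_cons[GB Gu] /seq_in_cons[GC Gv] E.
have [[bB pB] [bC pC]] := (spellP GB, spellP GC).
have [sBC /(IHu _ Gu Gv) ->] := block_cat_inj bB bC E.
by rewrite -pB sBC pC.
Qed.

Lemma spell_block i j n : i != j -> (0 < n)%N ->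
  spell (A i ^+ n *m A j) = block i j n.
Proof. by move=> ij n_gt0; rewrite -prod_block spell_prod //; exists i, j, n. Qed.

Lemma Gamma_block i j n : i != j -> (0 < n)%N -> Gamma (A i ^+ n *m A j).
Proof. by move=> ij n_gt0; exists i, j, n. Qed.

Lemma A_word_decomp w : seq_in A_R w ->
  exists u k m, seq_in Gamma u /\ w = spell_word u ++ nseq m (A k).
Proof.
elim/last_ind: w => [_|w B IHw /seq_in_rcons[/IHw [u [k [m [Gu ->]]]] [l ->]]].
  by exists [::], ord0, 0%N.
case: m => [|m]; first by exists u, l, 1%N; rewrite cats0 -cats1.
have [<-|lk] := eqVneq l k.
  exists u, l, m.+2; split => //.
  by rewrite rcons_cat -cats1 -[[:: _]]/(nseq 1 _) -nseqD addn1.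
have kl : k != l by rewrite eq_sym.
exists (rcons u (A k ^+ m.+1 *m A l)), k, 0%N; split.
  by apply/seq_in_rcons; split => //; apply: Gamma_block.
by rewrite cats0 spell_word_rcons spell_block // rcons_cat /block cats1.
Qed.

End Spelling.

Section ExtendedSums.
Variables (R : realType) (T : choiceType).
Local Open Scope ereal_scope.

Lemma esum_subset (S1 S2 : set T) (f : T -> \bar R) :
  S1 `<=` S2 -> (forall x, S2 x -> 0 <= f x) ->
  \esum_(x in S1) f x <= \esum_(x in S2) f x.
Proof.
move=> S12 f0; rewrite (esumID S1 S2) // (setIidr S12) leeDl //.
by apply: esum_ge0 => x [/f0].
Qed.

Lemma esumMn (S : set T) (f : T -> R) n : (forall x, S x -> (0 <= f x)%R) ->
  \esum_(x in S) ((f x *+ n)%R)%:E = ((\esum_(x in S) (f x)%:E) *+ n)%R.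
Proof.
move=> f0; elim: n => [|n IHn]; first by rewrite mulr0n esum1 // => x _; rewrite mulr0n.
rewrite mulrS -IHn -esumD => [|x /f0|x /f0 fx0]; rewrite ?lee_fin ?mulrn_wge0 //.
by apply: eq_esum => x _; rewrite mulrS EFinD.
Qed.

Lemma lty_mulrn (x : \bar R) n : x < +oo -> (x *+ n)%R < +oo.
Proof. by move=> xoo; elim: n => [|n IHn]; rewrite ?mulr0n ?ltry // mulrS lte_add_pinfty. Qed.

End ExtendedSums.

Section Zeta.
Variable R : realType.
Local Notation A := (@Amat R).
Local Notation M3 := 'M[R]_3.
Local Notation Gamma := (@Gamma R).
Local Notation A_R := (@A_R R).
Local Notation spelled := (@spell_word R @` words Gamma).
Implicit Types (s : R) (w : seq M3).

Lemma det_prod_A w : seq_in A_R w -> \det (\prod_(B <- w) B) = 1.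
Proof.
elim: w => [_|B w IHw /seq_in_cons[[k ->] wA]]; first by rewrite big_nil det1.
by rewrite big_cons -mulmxE det_mulmx det_Amat IHw ?mul1r.
Qed.

Lemma spelled_words : spelled `<=` words A_R.
Proof.
by move=> _ [u [u_nil uG] <-]; split; [rewrite spell_word_eq_nil | apply: spell_word_in_A].
Qed.

Lemma zeta_Gamma_spelled s :
  zeta Gamma s = \esum_(w in spelled) (phi s (\prod_(B <- w) B))%:E.
Proof.
rewrite esum_image => [|u v]; last by rewrite !inE => -[_ uG] [_ vG]; apply: spell_word_inj.
by apply: eq_esum => u [_ uG]; rewrite prod_spell_word.
Qed.

Lemma zeta_Gamma_le s : (zeta Gamma s <= zeta A_R s)%E.
Proof.
rewrite zeta_Gamma_spelled; apply: esum_subset spelled_words _ => w _.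
by rewrite lee_fin phi_ge0.
Qed.

Definition next_letter (B : M3) : M3 := if B == A 0 then A 1 else A 0.

Definition extend w := rcons w (next_letter (last 1 w)).

Lemma next_letter_Amat k : exists2 l, l != k & next_letter (A k) = A l.
Proof.
rewrite /next_letter; case: eqP => [/Amat_inj ->|Ak0]; first by exists 1.
by exists 0 => //; apply/eqP => k0; apply: Ak0; rewrite -k0.
Qed.

Lemma extend_spelled w : words A_R w -> ~ spelled w -> spelled (extend w).
Proof.
move=> [w_nil /A_word_decomp [u [k [m [uG Ew]]]]] w_spelled.
case: m Ew => [|m] Ew.
  rewrite cats0 in Ew; subst w.
  by case: w_spelled; exists u => //; split; rewrite -?(spell_word_eq_nil uG).
have [l lk El] := next_letter_Amat k.
have kl : k != l by rewrite eq_sym.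
exists (rcons u (A k ^+ m.+1 *m A l)).
  split; first by rewrite -size_eq0 size_rcons.
  by apply/seq_in_rcons; split => //; apply: Gamma_block.
have last_nseq (x a : M3) n : last x (nseq n.+1 a) = a by elim: n x => //= n IHn x.
rewrite spell_word_rcons spell_block // /extend Ew last_cat last_nseq El.
by rewrite rcons_cat /block cats1.
Qed.

Lemma phi_extend_le s : 0 <= s -> exists K : R, forall w, seq_in A_R w ->
  phi s (\prod_(B <- w) B) <= K * phi s (\prod_(B <- extend w) B).
Proof.
move=> s0; have [K phiK] := phi_mulmx_Amat_le s0; exists K => w wA.
have [l El] : exists l, next_letter (last 1 w) = A l.
  by rewrite /next_letter; case: ifP; eexists.
by rewrite /extend El big_rcons -mulmxE phiK // det_prod_A.
Qed.

Lemma zeta_A_le s : 0 <= s -> exists N, (zeta A_R s <= (zeta Gamma s *+ N)%R)%E.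
Proof.
move=> s0; have [K phiK] := phi_extend_le s0.
have [N KN] : exists N : nat, K <= N%:R.
  exists (Num.bound `|K|); apply: le_trans (ler_norm K) (ltW (archi_boundP _)).
  exact: normr_ge0.
pose f w := phi s (\prod_(B <- w) B).
have f0 w : 0 <= f w by apply: phi_ge0.
have nonspelled_le : (\esum_(w in words A_R `&` ~` spelled) (f w)%:E <=
    \esum_(w in spelled) ((f w *+ N)%R)%:E)%E.
  apply: (@le_trans _ _ (\esum_(w in words A_R `&` ~` spelled) ((f (extend w) *+ N)%R)%:E)).
    apply: le_esum => w [[_ wA] _]; rewrite lee_fin -mulr_natl /f.
    exact: le_trans (phiK w wA) (ler_wpM2r (phi_ge0 _ _) KN).
  rewrite -(esum_image _ _ (fun w => ((f w *+ N)%R)%:E)) => [|u v _ _ /rcons_inj[]//].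
  apply: esum_subset => [_ [w [wA wS] <-]|w _]; first exact: extend_spelled.
  by rewrite lee_fin mulrn_wge0.
exists N.+1; rewrite zeta_Gamma_spelled /zeta (esumID spelled) => [|w _]; last first.
  by rewrite lee_fin phi_ge0.
rewrite mulrS; apply: leeD.
  by apply: esum_subset => [w []|w _] //; rewrite lee_fin phi_ge0.
by apply: le_trans nonspelled_le _; rewrite esumMn.
Qed.

End Zeta.

Theorem lemma6p7 (R : realType) : crit_exp (@A_R R) = crit_exp (@Gamma R).
Proof.
rewrite /crit_exp; congr (ereal_inf [set _%:E | _ in _]).
apply/seteqP; split=> s [s0 zeta_fin]; split=> //.
  exact: le_lt_trans (zeta_Gamma_le s) zeta_fin.
have [N zeta_le] := zeta_A_le s0.
exact: le_lt_trans zeta_le (lty_mulrn N zeta_fin).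
Qed.
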